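(* Let $p$ be a self-adjoint projection of $V$, let $g_0$ be an invertible self-adjoint transformation generating a $p$-quadric $\Phi_0$, and let $l_\lambda$ be self-adjoint transformations leaving $\operatorname{Im}p$ invariant with $l_\lambda^2=\mathrm{id}-\lambda g_0$ on $\operatorname{Im}p$ (as in the family constructed for the projection pencil of $p$ and $g_0^{-1}$, where $\Phi_\lambda$ is generated by $g_\lambda$ with $g_\lambda^{-1}=g_0^{-1}-\lambda p$). Let $\Psi\neq\Phi_0$ be a $p$-quadric belonging to the same projection pencil (of $p$ and $g_0^{-1}$), generated by $g_\mu$ with $g_\mu^{-1}=g_0^{-1}-\mu p$, $\mu\neq0$. If $u\in\Phi_0\cap\Psi\cap\operatorname{Im}p$, then $l_\lambda(u)\in\Psi$.
   Context: $V$ is a real vector space of dimension $n+1$ with a fixed indefinite inner product (nondegenerate symmetric bilinear form) $\langle\cdot,\cdot\rangle$; self-adjoint means $\langle g(x),y\rangle=\langle x,g(y)\rangle$. A projection is $p$ with $p^2=p$; $V=\operatorname{Im}p\oplus\operatorname{Ker}p$. The quadric generated by a self-adjoint $g$ is the zero set in $P(V)$ of $x\mapsto\langle x,g(x)\rangle$; its dual is given by $g^{-1}$. The projection pencil of $p$ and $g_0^{-1}$ consists of the quadrics whose dual transformations lie in $\operatorname{span}(g_0^{-1},p)$. A quadric generated by $g$ is a $p$-quadric if $g(u+v)=p(g(u))-v$ for all $u\in\operatorname{Im}p$, $v\in\operatorname{Ker}p$. *)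

From HB Require Import structures.
From mathcomp Require Import all_boot all_order all_algebra.
Set Implicit Arguments. Unset Strict Implicit. Unset Printing Implicit Defensive.
Import Order.TTheory GRing.Theory Num.Theory.
Local Open Scope ring_scope.

(* V = 'cV[R]_(n.+1) (dimension n+1); the inner product is <x,y> = x^T J y
   for a symmetric invertible (= nondegenerate) matrix J. *)

Definition form (R : realFieldType) (n : nat) (J : 'M[R]_n.+1)
  (x y : 'cV[R]_n.+1) : R := (x^T *m J *m y) 0 0.

Definition indefinite_inner_product (R : realFieldType) (n : nat)
  (J : 'M[R]_n.+1) : Prop :=
  [/\ J^T = J, J \in unitmx,
      exists x, 0 < form J x x & exists y, form J y y < 0].

Definition self_adjoint (R : realFieldType) (n : nat) (J : 'M[R]_n.+1)
  (g : 'M[R]_n.+1) : Prop :=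
  forall x y, form J (g *m x) y = form J x (g *m y).

Definition projection (R : realFieldType) (n : nat) (p : 'M[R]_n.+1) : Prop :=
  p *m p = p.

(* x \in Im p  (for a projection p: p x = x);  x \in Ker p: p x = 0 *)
Definition in_Im (R : realFieldType) (n : nat) (p : 'M[R]_n.+1)
  (x : 'cV[R]_n.+1) : Prop := p *m x = x.
Definition in_Ker (R : realFieldType) (n : nat) (p : 'M[R]_n.+1)
  (x : 'cV[R]_n.+1) : Prop := p *m x = 0.

(* The vector x (a representative of a point of P(V)) lies on the quadric
   generated by g: <x, g(x)> = 0. *)
Definition on_quadric (R : realFieldType) (n : nat) (J g : 'M[R]_n.+1)
  (x : 'cV[R]_n.+1) : Prop := form J x (g *m x) = 0.

Definition p_quadric (R : realFieldType) (n : nat) (p g : 'M[R]_n.+1) : Prop :=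
  forall u v, in_Im p u -> in_Ker p v ->
    g *m (u + v) = p *m (g *m u) - v.

From Pilot Require Import Defs.
From HB Require Import structures.
From mathcomp Require Import all_boot all_order all_algebra.
Set Implicit Arguments. Unset Strict Implicit. Unset Printing Implicit Defensive.
Import Order.TTheory GRing.Theory Num.Theory.
Local Open Scope ring_scope.

(* On Im p every operator of the pencil is a rational function of g0: from
   g_mu^-1 = g0^-1 - mu p one gets g0 = g_mu - mu g0 g_mu there.  Since l_lambda
   commutes with g0 on Im p (l^2 = 1 - lambda g0), it commutes with g_mu, so
   <l u, g_mu l u> = <l^2 u, g_mu u> = <u, g_mu u> - lambda <u, g0 g_mu u>.
   The first term vanishes as u is on Psi; pairing g0 u = g_mu u - mu g0 g_mu u
   with u, and using that u is on Phi_0 and Psi, kills the second. *)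

Section Form.
Variables (R : realFieldType) (n : nat) (J : 'M[R]_n.+1).
Implicit Types x y z : 'cV[R]_n.+1.

Lemma formBl x y z : Defs.form J (x - y) z = Defs.form J x z - Defs.form J y z.
Proof. by rewrite /Defs.form linearB /= !mulmxBl !mxE. Qed.

Lemma formZl c x z : Defs.form J (c *: x) z = c * Defs.form J x z.
Proof. by rewrite /Defs.form linearZ /= -!scalemxAl !mxE. Qed.

Lemma formBr x y z : Defs.form J x (y - z) = Defs.form J x y - Defs.form J x z.
Proof. by rewrite /Defs.form mulmxBr !mxE. Qed.

Lemma formZr c x z : Defs.form J x (c *: z) = c * Defs.form J x z.
Proof. by rewrite /Defs.form -scalemxAr !mxE. Qed.

End Form.

Section ImageOfProjection.
Variables (R : realFieldType) (n : nat) (p : 'M[R]_n.+1).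
Implicit Types (a b g l : 'M[R]_n.+1) (x y : 'cV[R]_n.+1).

Definition stable_Im g := forall x, in_Im p x -> in_Im p (g *m x).

Definition comm_on_Im a b :=
  forall x, in_Im p x -> a *m (b *m x) = b *m (a *m x).

Lemma p_quadric_stable g : p_quadric p g -> stable_Im g.
Proof.
move=> pg x Ix; have := pg x 0 Ix (mulmx0 _ _).
by rewrite addr0 subr0 => /esym.
Qed.

(* Write x = g^-1 y as p x + (x - p x); the p-quadric rule gives
   y = p (g (p x)) - (x - p x), and applying p shows x - p x = 0. *)
Lemma p_quadric_invmx_stable g :
  projection p -> g \in unitmx -> p_quadric p g -> stable_Im (invmx g).
Proof.
move=> pp Ug pg y Iy; set x := invmx g *m y.
have Ipx : in_Im p (p *m x) by rewrite /in_Im mulmxA pp.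
have Kx : in_Ker p (x - p *m x) by rewrite /in_Ker mulmxBr [p *m (p *m _)]mulmxA pp subrr.
have Ey : y = p *m (g *m (p *m x)) - (x - p *m x).
  by rewrite -pg // addrC subrK /x mulKVmx.
have pyE : p *m y = p *m (g *m (p *m x)).
  by rewrite {1}Ey mulmxBr Kx subr0 [p *m (p *m _)]mulmxA pp.
have : y = y - (x - p *m x) by rewrite {1}Ey -pyE Iy.
move/eqP; rewrite eq_sym -subr_eq0 addrAC subrr add0r oppr_eq0 subr_eq0 eq_sym.
by move/eqP.
Qed.

Lemma comm_on_Im_proj l : stable_Im l -> comm_on_Im l p.
Proof. by move=> sl x Ix; rewrite Ix (sl x Ix). Qed.

Lemma comm_on_ImB l a b : comm_on_Im l a -> comm_on_Im l b -> comm_on_Im l (a - b).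
Proof. by move=> ca cb x Ix; rewrite !mulmxBl mulmxBr ca ?cb. Qed.

Lemma comm_on_ImZ l c a : comm_on_Im l a -> comm_on_Im l (c *: a).
Proof. by move=> ca x Ix; rewrite -!scalemxAl -scalemxAr ca. Qed.

Lemma comm_on_Im_invmx l g :
  g \in unitmx -> stable_Im (invmx g) -> comm_on_Im l g -> comm_on_Im l (invmx g).
Proof.
move=> Ug sg cg x Ix.
by rewrite -{1}(mulKmx Ug (l *m _)) -cg ?(mulKVmx Ug) //; exact: sg.
Qed.

Lemma comm_on_Im_of_sqr l g (lambda : R) :
  lambda != 0 -> stable_Im l ->
  (forall x, in_Im p x -> l *m (l *m x) = x - lambda *: (g *m x)) ->
  comm_on_Im l g.
Proof.
move=> l0 sl sql x Ix.
have := sql _ (sl x Ix); rewrite (sql x Ix) mulmxBr linearZ /=.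
by move=> /addrI /eqP; rewrite eqr_opp => /eqP /(scalerI l0).
Qed.

(* l commutes with g_mu^-1 = g0^-1 - mu p on Im p, hence with g_mu. *)
Lemma pencil_comm_on_Im l g0 gmu (mu : R) :
  projection p -> g0 \in unitmx -> p_quadric p g0 ->
  gmu \in unitmx -> p_quadric p gmu -> invmx gmu = invmx g0 - mu *: p ->
  stable_Im l -> comm_on_Im l g0 -> comm_on_Im l gmu.
Proof.
move=> pp Ug0 pg0 Ugmu pgmu Einv sl cg0.
have cinv : comm_on_Im l (invmx gmu).
  rewrite Einv; apply: comm_on_ImB; last exact/comm_on_ImZ/comm_on_Im_proj.
  exact: comm_on_Im_invmx Ug0 (p_quadric_invmx_stable pp Ug0 pg0) cg0.
rewrite -(invmxK gmu); apply: (comm_on_Im_invmx _ _ cinv); first by rewrite unitmx_inv.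
by rewrite invmxK; exact: p_quadric_stable.
Qed.

Lemma pencil_resolvent g0 gmu (mu : R) x :
  g0 \in unitmx -> gmu \in unitmx -> invmx gmu = invmx g0 - mu *: p ->
  in_Im p (gmu *m x) -> g0 *m x = gmu *m x - mu *: (g0 *m (gmu *m x)).
Proof.
move=> Ug0 Ugmu Einv Iw.
by rewrite -{1}(mulKmx Ugmu x) Einv mulmxBl -scalemxAl Iw mulmxBr mulKVmx // -scalemxAr.
Qed.

End ImageOfProjection.

Lemma pencil_cross_term (R : realFieldType) (n : nat) (J p g0 gmu : 'M[R]_n.+1)
    (mu : R) (u : 'cV[R]_n.+1) :
  g0 \in unitmx -> gmu \in unitmx -> invmx gmu = invmx g0 - mu *: p ->
  mu != 0 -> p_quadric p gmu -> in_Im p u ->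
  on_quadric J g0 u -> on_quadric J gmu u ->
  Defs.form J u (g0 *m (gmu *m u)) = 0.
Proof.
move=> Ug0 Ugmu Einv mu0 pgmu Iu Phi0u Psiu.
have := congr1 (Defs.form J u) (pencil_resolvent Ug0 Ugmu Einv (p_quadric_stable pgmu Iu)).
rewrite formBr formZr Phi0u Psiu sub0r => /esym /eqP.
by rewrite oppr_eq0 mulf_eq0 (negbTE mu0) => /eqP.
Qed.

Theorem mainTheorem5 (R : realFieldType) (n : nat) (J : 'M[R]_n.+1)
  (p g0 gmu l : 'M[R]_n.+1) (lambda mu : R) (u : 'cV[R]_n.+1) :
  indefinite_inner_product J ->
  projection p -> self_adjoint J p ->
  g0 \in unitmx -> self_adjoint J g0 -> p_quadric p g0 ->
  self_adjoint J l ->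
  (forall x, in_Im p x -> in_Im p (l *m x)) ->
  (forall x, in_Im p x -> l *m (l *m x) = x - lambda *: (g0 *m x)) ->
  (lambda = 0 -> forall x, in_Im p x -> l *m (g0 *m x) = g0 *m (l *m x)) ->
  gmu \in unitmx -> invmx gmu = invmx g0 - mu *: p -> mu != 0 ->
  self_adjoint J gmu -> p_quadric p gmu ->
  u != 0 -> on_quadric J g0 u -> on_quadric J gmu u -> in_Im p u ->
  on_quadric J gmu (l *m u).
Proof.
move=> _ pp _ Ug0 sag0 pg0 sal sl sql cg0_deg Ugmu Einv mu0 _ pgmu _ Phi0u Psiu Iu.
have cg0 : comm_on_Im p l g0.
  by have [/cg0_deg //|l0] := eqVneq lambda 0; exact: comm_on_Im_of_sqr l0 sl sql.
have cgmu := pencil_comm_on_Im pp Ug0 pg0 Ugmu pgmu Einv sl cg0.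
have cross := pencil_cross_term Ug0 Ugmu Einv mu0 pgmu Iu Phi0u Psiu.
rewrite /on_quadric -cgmu // -sal sql // formBl formZl Psiu sag0 cross.
by rewrite mulr0 subrr.
Qed.
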